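(* Let $S$ be an entropy function for a finite set $X$, let $X'\subset X$, let $R$ be a new element not in $X$, $Y:=X'\cup\{R\}$, and let $T$ be the entropy function on $Y$ defined by $T(A):=S(A)$ and $T(A\cup\{R\}):=S(A\cup(X\setminus X'))$ for $A\subseteq X'$. Given any EDF $g$ for $T$, there exists an EDF $f$ for $S$ with $f(x)=g(x)$ for all $x\in X'$ and $\sum_{x\in X\setminus X'}f(x)=g(R)$.
   Context: An entropy function for a finite set $X$ is a function $S:2^X\to[0,\infty)$ with $S(\emptyset)=0$, $S(A)+S(B)\ge S(A\cap B)+S(A\cup B)$ and $S(A)+S(B)\ge S(A\setminus B)+S(B\setminus A)$ for all $A,B\subseteq X$. An entanglement distribution function (EDF) for $S$ is a function $f:X\to\mathbb R$ with $\big|\sum_{x\in A}f(x)\big|\le S(A)$ for all $A\subseteq X$. *)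

From mathcomp Require Import all_boot all_order all_algebra.
From mathcomp Require Import reals.
Set Implicit Arguments. Unset Strict Implicit. Unset Printing Implicit Defensive.
Import Order.TTheory GRing.Theory Num.Theory.
Local Open Scope ring_scope.

Definition entropy_fun (X : finType) (R : numDomainType) (S : {set X} -> R) : Prop :=
  [/\ S set0 = 0,
      forall A, 0 <= S A,
      forall A B, S (A :&: B) + S (A :|: B) <= S A + S B
    & forall A B, S (A :\: B) + S (B :\: A) <= S A + S B].

Definition EDF (X : finType) (R : numDomainType) (S : {set X} -> R) (f : X -> R) : Prop :=
  forall A : {set X}, `| \sum_(x in A) f x | <= S A.

(* Y := X' ∪ {R}, realised as option {x | x \in X'}, with the new element
   R represented by None. *)
Definition Yset (X : finType) (X' : {set X}) : finType := option {x : X | x \in X'}.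

Definition restrT (X : finType) (R : numDomainType) (X' : {set X})
    (S : {set X} -> R) (B : {set Yset X'}) : R :=
  S ([set val y | y : {x : X | x \in X'} & Some y \in B]
       :|: (if None \in B then ~: X' else set0)).

From mathcomp Require Import all_boot all_order all_algebra.
From mathcomp Require Import reals ring lra.
Import Order.TTheory GRing.Theory Num.Theory.
Local Open Scope ring_scope.

(* Splitting one point z off a merged block W (with value c) amounts to
   choosing its value d so that, for every B disjoint from W,
   |h(B) + d| <= S(B + z) and |h(B) + c - d| <= S(B + (W - z)).  Each such
   condition confines d to an interval, and two of these intervals always meet:
   this is exactly what the inequalities S(A) + S(A') >= S(A - A') + S(A' - A)
   and S(A) + S(A') >= S(A & A') + S(A | A') give.  A finite family of pairwise
   intersecting intervals has a common point, and induction on |W| then splits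
   the merged point R of Y back into the points of X - X'. *)

Lemma exists_between_in (d : Order.disp_t) (T : orderType d) (I : finType)
    (P : pred I) (i0 : I) (L U : I -> T) :
  P i0 -> {in P &, forall i j, (L i <= U j)%O} ->
  exists m, {in P, forall i, (L i <= m)%O} /\ {in P, forall j, (m <= U j)%O}.
Proof.
move=> Pi0 LU; exists (\big[Order.max/L i0]_(i in P) L i); split.
  by move=> i Pi; apply: le_bigmax_cond.
by move=> j Pj; apply: bigmax_le => [|i Pi]; apply: LU.
Qed.

(* [merged_EDF S W h c]: [h] off [W], together with the value [c] at a new
   point standing for the whole block [W], is an EDF for the entropy function
   obtained from [S] by merging [W] into that point. *)
Definition merged_EDF {R : numDomainType} {X : finType} (S : {set X} -> R)
    (W : {set X}) (h : X -> R) (c : R) : Prop :=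
  forall B : {set X}, [disjoint B & W] ->
    `|\sum_(x in B) h x| <= S B /\ `|\sum_(x in B) h x + c| <= S (B :|: W).

Section MergedEDF.
Context {R : realDomainType} {X : finType} {S : {set X} -> R}.
Context (S_entropy : entropy_fun S).

Let S_set0 : S set0 = 0. Proof. by case: S_entropy. Qed.
Let S_submod A B : S (A :&: B) + S (A :|: B) <= S A + S B.
Proof. by case: S_entropy. Qed.
Let S_diff A B : S (A :\: B) + S (B :\: A) <= S A + S B.
Proof. by case: S_entropy. Qed.

Lemma entropy_diffU {Y A A' : {set X}} :
  [disjoint A & Y] -> [disjoint A' & Y] ->
  S (A :\: A') + S (A' :\: A) <= S (A :|: Y) + S (A' :|: Y).
Proof.
have setDU (B B' : {set X}) :
    [disjoint B & Y] -> B :\: B' = (B :|: Y) :\: (B' :|: Y).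
  move=> BY; apply/setP=> x; rewrite !inE.
  by case xY: (x \in Y); rewrite ?(disjointFl BY xY) ?orbT ?andbF ?orbF.
by move=> AY A'Y; rewrite (setDU A A') // (setDU A' A).
Qed.

Lemma entropy_capU {Y1 Y2 A A' : {set X}} :
  [disjoint A & Y2] -> [disjoint A' & Y1] -> [disjoint Y1 & Y2] ->
  S (A :&: A') + S ((A :|: A') :|: (Y1 :|: Y2)) <= S (A :|: Y1) + S (A' :|: Y2).
Proof.
move=> AY2 A'Y1 Y12; rewrite setUACA.
suff -> : A :&: A' = (A :|: Y1) :&: (A' :|: Y2) by [].
apply/setP=> x; rewrite !inE.
case xY1: (x \in Y1).
  by rewrite (disjointFr Y12 xY1) (disjointFl A'Y1 xY1) /= !andbF.
by case xY2: (x \in Y2); rewrite ?(disjointFl AY2 xY2) ?orbF.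
Qed.

Section SplitOff.
Context {W : {set X}} {h : X -> R} {c : R} (hWc : merged_EDF S W h c).

Lemma merged_EDF_sumB {Y A A' : {set X}} :
  Y \subset W -> [disjoint A & W] -> [disjoint A' & W] ->
  `|\sum_(x in A) h x - \sum_(x in A') h x| <= S (A :|: Y) + S (A' :|: Y).
Proof.
move=> YW AW A'W.
rewrite (big_setID A') [X in _ - X](big_setID A) /= setIC.
rewrite opprD addrACA subrr add0r.
apply: le_trans (ler_normB _ _) _.
apply: le_trans (entropy_diffU (disjointWr YW AW) (disjointWr YW A'W)).
by apply: lerD; apply: (hWc _ _).1; apply: disjointWl (subsetDl _ _) _.
Qed.

Lemma merged_EDF_sumD {Y1 Y2 A A' : {set X}} :
  Y1 :|: Y2 = W -> [disjoint Y1 & Y2] -> [disjoint A & W] -> [disjoint A' & W] ->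
  `|\sum_(x in A) h x + \sum_(x in A') h x + c| <= S (A :|: Y1) + S (A' :|: Y2).
Proof.
move=> Y12W Y12 AW A'W.
have sumIU : \sum_(x in A) h x + \sum_(x in A') h x =
             \sum_(x in A :&: A') h x + \sum_(x in A :|: A') h x.
  rewrite (big_setID A' (A := A)) (big_setID A' (A := A :|: A')) /=.
  rewrite (setIidPr (subsetUr A A')) setDUl setDv setU0.
  by rewrite addrAC -addrA addrC.
have Y1W : Y1 \subset W by rewrite -Y12W subsetUl.
have Y2W : Y2 \subset W by rewrite -Y12W subsetUr.
rewrite sumIU -addrA; apply: le_trans (ler_normD _ _) _.
apply: le_trans (entropy_capU (disjointWr Y2W AW) (disjointWr Y1W A'W) Y12).
apply: lerD; first by apply: (hWc _ _).1; apply: disjointWl (subsetIl _ _) _.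
rewrite Y12W; apply: (hWc _ _).2.
by rewrite -setI_eq0 setIUl setU_eq0 !setI_eq0 AW A'W.
Qed.

Context {z : X} (zW : z \in W).

Lemma merged_EDF_split_value :
  exists d, forall A : {set X}, [disjoint A & W] ->
    `|\sum_(x in A) h x + d| <= S (A :|: [set z]) /\
    `|\sum_(x in A) h x + c - d| <= S (A :|: W :\ z).
Proof.
have zWz : [set z] :|: W :\ z = W by rewrite setD1K.
have z_Wz : [disjoint [set z] & W :\ z] by rewrite disjoints1 !inE eqxx.
have z_W : [set z] \subset W by rewrite sub1set.
have Wz_W : W :\ z \subset W by apply: subsetDl.
pose L A := Num.max (- S (A :|: [set z]) - \sum_(x in A) h x)
                    (\sum_(x in A) h x + c - S (A :|: W :\ z)).
pose U A := Num.min (S (A :|: [set z]) - \sum_(x in A) h x)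
                    (\sum_(x in A) h x + c + S (A :|: W :\ z)).
have [||d [Ld Ud]] :=
  @exists_between_in _ _ _ (fun A : {set X} => [disjoint A & W]) set0 L U.
- by rewrite /= -setI_eq0 set0I.
- move=> A A' AW A'W; rewrite /L /U ge_max !le_min.
  move: (merged_EDF_sumB z_W A'W AW) (merged_EDF_sumB Wz_W AW A'W).
  move: (merged_EDF_sumD zWz z_Wz AW A'W) (merged_EDF_sumD zWz z_Wz A'W AW).
  rewrite !ler_norml => /andP[? ?] /andP[? ?] /andP[? ?] /andP[? ?].
  by rewrite -!andbA; apply/and4P; split; lra.
exists d => A AW; move: (Ld A AW) (Ud A AW); rewrite /L /U ge_max le_min.
by move=> /andP[? ?] /andP[? ?]; rewrite !ler_norml; split; apply/andP; split; lra.
Qed.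

Lemma merged_EDF_split :
  exists d, merged_EDF S (W :\ z) [eta h with z |-> d] (c - d).
Proof.
have [d hd] := merged_EDF_split_value.
exists d => B; set h' := [eta h with z |-> d].
have sum_notin (A : {set X}) :
    z \notin A -> \sum_(x in A) h' x = \sum_(x in A) h x.
  move=> zA; apply: eq_bigr => x xA /=.
  by have /negbTE -> : x != z by apply: contraNneq zA => <-.
have disjoint_setD1 : [disjoint B :\ z & W] = [disjoint B & W :\ z].
  by rewrite -!setI_eq0 setIDAC setIDA.
rewrite -disjoint_setD1; case: (boolP (z \in B)) => [zB BzW | zB].
  rewrite (big_setD1 z zB) sum_notin ?setD11 //= eqxx.
  have [_ hBz] := hWc _ BzW; have [hBz' _] := hd _ BzW.
  have -> : B :|: W :\ z = (B :\ z) :|: W.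
    by apply/setP=> x; rewrite !inE; case: eqP => [->|]; rewrite ?zB ?zW.
  rewrite (_ : d + _ + (c - d) = \sum_(x in B :\ z) h x + c); last by ring.
  split; last exact: hBz.
  by rewrite [d + _]addrC; rewrite setUC (setD1K zB) in hBz'.
have Bz : [disjoint B & [set z]] by rewrite disjoint_sym disjoints1.
rewrite (setDidPl Bz) => BW.
rewrite sum_notin // addrA; split; [exact: (hWc _ BW).1 | exact: (hd _ BW).2].
Qed.

End SplitOff.

Theorem merged_EDF_extend {W : {set X}} {h : X -> R} {c : R} :
  merged_EDF S W h c ->
  exists f, [/\ EDF S f, {in ~: W, f =1 h} & \sum_(x in W) f x = c].
Proof.
move Wn: #|W| => n; elim: n W Wn h c => [|n IHn] W Wn h c hWc.
  move/eqP: Wn; rewrite cards_eq0 => /eqP W0; subst W.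
  have disjoint_set0 (A : {set X}) : [disjoint A & set0].
    by rewrite -setI_eq0 setI0.
  exists h; split=> // [A|]; first by have [] := hWc A (disjoint_set0 A).
  have [_] := hWc set0 (disjoint_set0 _).
  by rewrite !big_set0 add0r setU0 S_set0 normr_le0 => /eqP.
have [z zW] : exists z, z \in W by apply/set0Pn; rewrite -cards_eq0 Wn.
have [d hd] := merged_EDF_split hWc zW.
have [|f [f_EDF fh fW]] := IHn (W :\ z) _ _ _ hd.
  by move: Wn; rewrite (cardsD1 z) zW => -[].
exists f; split=> // [x|].
  rewrite inE => xW; rewrite fh /=; last by rewrite !inE (negbTE xW) andbF.
  by have /negbTE -> : x != z by apply: contraNneq xW => ->.
rewrite (big_setD1 z zW) fW fh /=; last by rewrite !inE eqxx.
by rewrite eqxx addrC subrK.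
Qed.

End MergedEDF.

Definition ext0 {R : numDomainType} {X : finType} {X' : {set X}}
    (g : Yset X' -> R) (x : X) : R :=
  if insub x is Some y then g (Some y) else 0.

Definition embedY {X : finType} (X' : {set X}) (B : {set X}) : {set Yset X'} :=
  [set Some y | y in [set y : {x : X | x \in X'} | val y \in B]].

Section MergeOutsideSubset.
Context {R : numDomainType} {X : finType} {S : {set X} -> R} {X' : {set X}}.
Context {g : Yset X' -> R}.

Lemma None_notin_embedY B : None \notin embedY X' B.
Proof. by apply/imsetP => -[]. Qed.

Lemma mem_embedY B y : (Some y \in embedY X' B) = (val y \in B).
Proof. by rewrite mem_imset ?inE //; exact: Some_inj. Qed.

Lemma val_embedY {E : {set Yset X'}} {B : {set X}} :
  (forall y, (Some y \in E) = (val y \in B)) ->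
  [set val y | y : {x : X | x \in X'} & Some y \in E] = B :&: X'.
Proof.
move=> memE; apply/setP=> x; rewrite inE; apply/imsetP/andP => [[y]|[xB xX']].
  by rewrite inE memE => yB ->; split; last exact: valP.
by exists (exist _ x xX'); rewrite // inE memE.
Qed.

Lemma sum_embedY B : \sum_(y in embedY X' B) g y = \sum_(x in B) ext0 g x.
Proof.
rewrite big_imset /=; last by move=> ? ? _ _ [].
rewrite (big_setID X') /= [X in _ + X]big1 ?addr0 => [|x]; last first.
  by rewrite !inE => /andP[xX' _]; rewrite /ext0 insubF // (negbTE xX').
rewrite -(val_embedY (mem_embedY B)) big_imset /=; last first.
  by move=> ? ? _ _; apply: val_inj.
apply: eq_big => [y|y _]; first by rewrite !inE mem_embedY.
by rewrite /ext0 valK.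
Qed.

Lemma restrT_embedY B : restrT S (embedY X' B) = S (B :&: X').
Proof.
by rewrite /restrT (val_embedY (mem_embedY B)) (negbTE (None_notin_embedY B)) setU0.
Qed.

Lemma restrT_setU1_embedY B :
  restrT S (None |: embedY X' B) = S (B :&: X' :|: ~: X').
Proof.
rewrite /restrT setU11 (@val_embedY _ B) // => y.
by rewrite in_setU1 mem_embedY.
Qed.

Lemma merged_EDF_restrT :
  EDF (restrT S) g -> merged_EDF S (~: X') (ext0 g) (g None).
Proof.
move=> g_EDF B; rewrite disjoints_subset setCK => /setIidPl BX'.
split.
  by have := g_EDF (embedY X' B); rewrite restrT_embedY BX' sum_embedY.
have := g_EDF (None |: embedY X' B).
rewrite restrT_setU1_embedY BX' big_setU1 ?None_notin_embedY //=.
by rewrite addrC sum_embedY.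
Qed.

End MergeOutsideSubset.

Theorem theorem24 (R : realType) (X : finType) (S : {set X} -> R)
    (X' : {set X}) (g : Yset X' -> R) :
  entropy_fun S ->
  EDF (restrT S) g ->
  exists f : X -> R,
    [/\ EDF S f,
        (forall (x : X) (hx : x \in X'), f x = g (Some (exist _ x hx)))
      & \sum_(x in ~: X') f x = g None].
Proof.
move=> S_entropy g_EDF.
have [f [f_EDF f_ext0 f_sum]] :=
  merged_EDF_extend S_entropy (merged_EDF_restrT g_EDF).
exists f; split=> // x x_X'.
by rewrite f_ext0 ?inE ?negbK // /ext0 insubT.
Qed.
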